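(* Let $k,n$ be positive integers with $k\leqslant n$ and let $X\subseteq[n]^k_<$ be either an order ideal or an interval of $[n]^k_<$ in the Bruhat order. If $L$ is a linear extension of $X$, then $\partial_D L=\partial_H L$.
   Context: $[n]:=\{1,\ldots,n\}$; $[n]^k_<$ denotes the set of $k$-element subsets of $[n]$, identified with increasing tuples, with Bruhat order $x\leqslant y$ iff $x_i\leqslant y_i$ for all $i\in[k]$. An interval is a set $\{z: x\leqslant z\leqslant y\}$. A linear extension of $X$ is a tuple $L=(L_1,\ldots,L_h)$ listing each element of $X$ exactly once such that $L_i<L_j$ implies $i<j$. For a tuple $C=(C_1,\ldots,C_h)$ of distinct elements of $[n]^k_<$: the dual graph $D(C)$ is the graph on $[h]$ with $\{i,j\}$ an edge iff $|C_i\cap C_j|=k-1$; the Hasse graph $H(C)$ is the graph on $[h]$ with $\{i,j\}$ an edge iff one of $C_i,C_j$ covers the other in the Bruhat order. For a graph $G$ on $[h]$, its track $T_G=\{v_1,\ldots,v_r\}$ is defined by $v_1=1$ and, for $i\geqslant2$, $v_i=\min\{j\in[h]: j>v_{i-1},\ \{v_{i-1},j\}\text{ an edge}\}$ if this exists, otherwise $r=i-1$. The promotion $\partial_G\in S_h$ is given by $\partial_G(i)=i-1$ for $i\notin T_G$, $\partial_G(v_j)=v_{j+1}-1$ for $j\in[r-1]$, $\partial_G(v_r)=h$. For $\sigma\in S_h$, $\sigma C:=(C_{\sigma^{-1}(1)},\ldots,C_{\sigma^{-1}(h)})$. Define $\partial_D C:=\partial_{D(C)}C$ and $\partial_H C:=\partial_{H(C)}C$.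 *)

From mathcomp Require Import all_boot.
Set Implicit Arguments. Unset Strict Implicit. Unset Printing Implicit Defensive.

(* Elements of [n]^k_< are represented as k-tuples of 'I_n (values 0..n-1,
   i.e. [n] shifted by -1) that are strictly increasing. *)
Section Defs.
Variables n k : nat.
Local Notation elt := (k.-tuple 'I_n).

Definition increasing (x : elt) : bool := sorted ltn (map val x).

Definition bruhat_le (x y : elt) : bool := [forall i : 'I_k, tnth x i <= tnth y i].
Definition bruhat_lt (x y : elt) : bool := bruhat_le x y && (x != y).

Definition bruhat_covers (y x : elt) : bool :=
  bruhat_lt x y &&
  ~~ [exists z : elt, [&& increasing z, bruhat_lt x z & bruhat_lt z y]].

Definition is_subposet (X : {set elt}) : Prop := forall x, x \in X -> increasing x.

Definition order_ideal (X : {set elt}) : Prop :=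
  is_subposet X /\
  forall x y, increasing x -> y \in X -> bruhat_le x y -> x \in X.

Definition interval (X : {set elt}) : Prop :=
  exists x y : elt, increasing x /\ increasing y /\
  X = [set z | [&& increasing z, bruhat_le x z & bruhat_le z y]].

(* L = (L_1,...,L_h) (stored 0-based in a seq) lists each element of X exactly
   once, and L_i < L_j implies i < j. *)
Definition linear_extension (X : {set elt}) (L : seq elt) : Prop :=
  uniq L /\ (forall x, (x \in L) = (x \in X)) /\
  forall i j x y, onth L i = Some x -> onth L j = Some y -> bruhat_lt x y -> i < j.

(* Graphs on [h] (1-based vertices) attached to a tuple C. *)
Definition dual_graph (C : seq elt) (i j : nat) : bool :=
  match onth C i.-1, onth C j.-1 with
  | Some a, Some b => (0 < i) && (0 < j) && (i != j) &&
                      (#|[set x in a] :&: [set x in b]| == k.-1)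
  | _, _ => false
  end.

Definition hasse_graph (C : seq elt) (i j : nat) : bool :=
  match onth C i.-1, onth C j.-1 with
  | Some a, Some b => (0 < i) && (0 < j) && (i != j) &&
                      (bruhat_covers a b || bruhat_covers b a)
  | _, _ => false
  end.
End Defs.

Definition track_next (G : nat -> nat -> bool) (h v : nat) : option nat :=
  ohead [seq j <- iota v.+1 (h - v) | G v j].

(* the track T_G = (v_1, ..., v_r), v_1 = 1; fuel h suffices since the
   v_i strictly increase inside [h] *)
Fixpoint track_from (G : nat -> nat -> bool) (h fuel v : nat) : seq nat :=
  v :: match fuel with
       | 0 => [::]
       | f.+1 => match track_next G h v with
                 | Some w => track_from G h f w
                 | None => [::]
                 end
       end.

Definition track (G : nat -> nat -> bool) (h : nat) : seq nat := track_from G h h 1.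

Definition promotion (G : nat -> nat -> bool) (h i : nat) : nat :=
  if i \in track G h then
    match track_next G h i with Some w => w.-1 | None => h end
  else i.-1.

(* sigma C := (C_{sigma^-1(1)}, ..., C_{sigma^-1(h)}) *)
Definition perm_act (T : Type) (sigma : nat -> nat) (C : seq T) : seq T :=
  pmap (fun p => onth C (find (fun i => sigma i.+1 == p) (iota 0 (size C))))
       (iota 1 (size C)).

Definition promD n k (C : seq (k.-tuple 'I_n)) :=
  perm_act (promotion (dual_graph C) (size C)) C.
Definition promH n k (C : seq (k.-tuple 'I_n)) :=
  perm_act (promotion (hasse_graph C) (size C)) C.

From mathcomp Require Import all_boot zify.
Set Implicit Arguments. Unset Strict Implicit. Unset Printing Implicit Defensive.

(* Both promotions only see their graph through the successor map
   v |-> min {j > v : {v, j} is an edge}, so it suffices that D(L) and H(L)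
   have the same successor map.  Two k-subsets sharing k-1 elements are
   Bruhat-comparable, and every relation a < b refines to a < z <= b with z
   sharing k-1 elements with a.  Since X is convex and L lists X along a
   linear extension, the first dual neighbour of L_v after v therefore covers
   L_v, and every Hasse neighbour of L_v after v is preceded by a dual one. *)

Lemma ohead_filter_eq (P Q : pred nat) (s : seq nat) : sorted ltn s ->
  {in s, forall j, Q j -> exists2 m, m \in s & (m <= j) && P m} ->
  {in s, forall j, P j -> {in s, forall m, m < j -> ~~ P m} -> Q j} ->
  ohead (filter P s) = ohead (filter Q s).
Proof.
elim: s => [|x s IHs] //= /[dup] /(order_path_min ltn_trans) /allP x_min /path_sorted s_sorted.
move=> P_before_Q first_P_Q.
have s_sub j : j \in s -> j \in x :: s by rewrite inE => ->; rewrite orbT.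
have le_x_head m : m \in x :: s -> m <= x -> m = x.
  by rewrite inE => /predU1P[// | /x_min lt_xm]; rewrite leqNgt lt_xm.
case Px: (P x).
  rewrite first_P_Q ?mem_head // => m; rewrite inE => /predU1P[->|/x_min lt_xm].
    by rewrite ltnn.
  by rewrite ltnNge (ltnW lt_xm).
have -> : Q x = false.
  apply/negP => /(P_before_Q x (mem_head _ _))[m /le_x_head m_x /andP[/m_x ->]].
  by rewrite Px.
apply: IHs => // j js.
  case/(P_before_Q j (s_sub j js)) => m; rewrite inE => /predU1P[->|ms].
    by rewrite Px andbF.
  by exists m.
move=> Pj P_none; apply: first_P_Q (s_sub j js) Pj _ => m.
by rewrite inE => /predU1P[->|/P_none//]; rewrite Px.
Qed.

Lemma count_ltn_sorted (s : seq nat) i t : sorted ltn s -> i < size s ->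
  (count (fun x => x < t) s <= i) = (t <= nth 0 s i).
Proof.
elim: s i => [|x s IHs] // i /[dup] /(order_path_min ltn_trans) /allP x_min /path_sorted s_sorted.
have count_s0 : t <= x -> count (fun y => y < t) s = 0.
  move=> le_tx; apply/eqP; rewrite -leqn0 leqNgt -has_count; apply/hasPn => y /x_min lt_xy.
  by rewrite -leqNgt (leq_trans le_tx (ltnW lt_xy)).
case: i => [|i] /= lt_i; case: (ltnP x t) => [lt_xt|le_tx].
- by rewrite add1n.
- by rewrite count_s0.
- by rewrite add1n ltnS IHs.
- by rewrite count_s0 // (leq_trans le_tx) // ltnW // x_min // mem_nth.
Qed.

Lemma card_setI_uniq (T : finType) (s : seq T) (A : {set T}) : uniq s ->
  #|[set y in s] :&: A| = count [in A] s.
Proof.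
move=> s_uniq; rewrite -size_filter -(card_uniqP _) ?filter_uniq //.
by apply: eq_card => y; rewrite !inE mem_filter andbC.
Qed.

Lemma card_set1I (T : finType) (p : T) (A : {set T}) : #|[set p] :&: A| = (p \in A).
Proof.
case: (boolP (p \in A)) => pA; first by rewrite (setIidPl _) ?cards1 ?sub1set.
by rewrite disjoint_setI0 ?cards0 // disjoints1.
Qed.

Section Bruhat.
Variables n k : nat.
Local Notation elt := (k.-tuple 'I_n).
Local Notation adjacent a b := (#|[set y in a] :&: [set y in b]| == k.-1).
Implicit Types (a b x y z : elt) (X : {set elt}).

Lemma bruhat_le_trans y x z : bruhat_le x y -> bruhat_le y z -> bruhat_le x z.
Proof. by move=> /forallP le_xy /forallP le_yz; apply/forallP => i; apply: leq_trans (le_yz i). Qed.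

Lemma bruhat_ltW x y : bruhat_lt x y -> bruhat_le x y.
Proof. by case/andP. Qed.

Lemma nth_map_val x (i : 'I_k) : nth 0 (map val x) i = tnth x i.
Proof. by rewrite (nth_map (tnth x i)) ?size_tuple // -tnth_nth. Qed.

Lemma increasing_tnth x :
  increasing x <-> forall i j : 'I_k, i < j -> tnth x i < tnth x j.
Proof.
split=> [x_incr i j lt_ij | x_lt].
  rewrite -!nth_map_val.
  by apply: (sorted_ltn_nth ltn_trans) => //; rewrite inE size_map size_tuple.
apply/(sortedP 0) => i; rewrite size_map size_tuple => lt_i1.
have lt_i : i < k by apply: ltnW.
by have := x_lt (Ordinal lt_i) (Ordinal lt_i1) (ltnSn i); rewrite -!nth_map_val.
Qed.

Lemma increasing_inj x : increasing x -> injective (tnth x).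
Proof.
move/increasing_tnth => x_lt i j eq_ij; apply/val_inj.
case: (ltngtP i j) => // [/x_lt | /x_lt]; by rewrite eq_ij ltnn.
Qed.

Lemma increasing_uniq x : increasing x -> uniq x.
Proof. by move=> x_incr; rewrite -(map_inj_uniq val_inj) (sorted_uniq ltn_trans ltnn). Qed.

Lemma card_increasing x : increasing x -> #|[set y in x]| = k.
Proof. by move=> /increasing_uniq /card_uniqP; rewrite cardsE size_tuple. Qed.

Lemma bruhat_le_count a b : increasing a -> increasing b ->
  (forall t, count (fun y : 'I_n => y < t) b <= count (fun y : 'I_n => y < t) a) ->
  bruhat_le a b.
Proof.
move=> a_incr b_incr le_count; apply/forallP => i; rewrite leqNgt; apply/negP => lt_ba.
have count_le_i x t : increasing x ->
    (count (fun y : 'I_n => y < t) x <= i) = (t <= tnth x i).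
  move=> x_incr; rewrite -(count_map val (fun m : nat => m < t)) count_ltn_sorted //.
    by rewrite nth_map_val.
  by rewrite size_map size_tuple.
have cnt_a : count (fun y : 'I_n => y < (tnth b i).+1) a <= i by rewrite count_le_i.
have cnt_b : i < count (fun y : 'I_n => y < (tnth b i).+1) b.
  by rewrite ltnNge count_le_i // ltnn.
by move: (le_count (tnth b i).+1) => /(leq_trans cnt_b); rewrite ltnNge cnt_a.
Qed.

Lemma bruhat_le_setD a b (p q : 'I_n) : increasing a -> increasing b ->
  [set y in a] :\: [set y in b] = [set p] -> [set y in b] :\: [set y in a] = [set q] ->
  p < q -> bruhat_le a b.
Proof.
move=> a_incr b_incr a_minus_b b_minus_a lt_pq; apply: bruhat_le_count => // t.
set A := [set y in a]; set B := [set y in b]; set T := [set y : 'I_n | y < t].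
have count_T x : increasing x -> count (fun y : 'I_n => y < t) x = #|[set y in x] :&: T|.
  by move=> x_incr; rewrite card_setI_uniq ?increasing_uniq //; apply: eq_count => y; rewrite inE.
rewrite !count_T // -(cardsID B (A :&: T)) -(cardsID A (B :&: T)).
rewrite [B :&: T :&: A]setIAC [A :&: T :&: B]setIAC [B :&: A]setIC leq_add2l.
rewrite -!setIDAC a_minus_b b_minus_a !card_set1I !inE.
by case: (ltnP q t) => // /(ltn_trans lt_pq) ->.
Qed.

Lemma bruhat_comparable_adjacent a b : 0 < k -> increasing a -> increasing b ->
  adjacent a b -> bruhat_le a b || bruhat_le b a.
Proof.
move=> k_gt0 a_incr b_incr /eqP card_ab.
have setD_singleton x y : increasing x -> #|[set z in x] :&: [set z in y]| = k.-1 ->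
    exists p, [set z in x] :\: [set z in y] = [set p].
  move=> x_incr card_xy; apply/cards1P.
  by have := cardsID [set z in y] [set z in x]; rewrite card_xy card_increasing //; lia.
have [p a_minus_b] := setD_singleton a b a_incr card_ab.
have [q b_minus_a] : exists q, [set z in b] :\: [set z in a] = [set q].
  by apply: setD_singleton; rewrite // setIC.
have p_ab : p \in [set z in a] :\: [set z in b] by rewrite a_minus_b set11.
have q_ba : q \in [set z in b] :\: [set z in a] by rewrite b_minus_a set11.
have : p != q.
  apply: contraTneq p_ab => ->; move: q_ba; rewrite !inE.
  by case/andP => /negbTE ->; rewrite andbF.
rewrite neq_ltn => /orP[lt_pq | lt_qp].
  by rewrite (bruhat_le_setD a_incr b_incr a_minus_b b_minus_a lt_pq).
by rewrite (bruhat_le_setD b_incr a_incr b_minus_a a_minus_b lt_qp) orbT.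
Qed.

Definition replace_at x (i : 'I_k) (v : 'I_n) : elt :=
  [tuple if j == i then v else tnth x j | j < k].

Lemma tnth_replace_at x i v j :
  tnth (replace_at x i v) j = if j == i then v else tnth x j.
Proof. by rewrite tnth_mktuple. Qed.

Section ReplaceAt.
Variables (x : elt) (i : 'I_k) (v : 'I_n).
Hypotheses (x_incr : increasing x) (lt_xi_v : tnth x i < v)
  (lt_v_x : forall j : 'I_k, i < j -> v < tnth x j).

Lemma bruhat_lt_replace_at : bruhat_lt x (replace_at x i v).
Proof.
apply/andP; split.
  apply/forallP => j; rewrite tnth_replace_at.
  by case: eqP => [->|_]; [apply: ltnW | apply: leqnn].
apply/eqP => /(congr1 (fun t : elt => tnth t i)); rewrite tnth_replace_at eqxx => eq_xi_v.
by move: lt_xi_v; rewrite eq_xi_v ltnn.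
Qed.

Lemma increasing_replace_at : increasing (replace_at x i v).
Proof.
have x_lt := iffLR (increasing_tnth x) x_incr.
apply/increasing_tnth => j j' lt_jj'; rewrite !tnth_replace_at.
case: (eqVneq j i) => [eq_ji | _]; case: (eqVneq j' i) => [eq_j'i | _].
- by rewrite eq_ji eq_j'i ltnn in lt_jj'.
- by apply: lt_v_x; rewrite -eq_ji.
- by apply: ltn_trans (x_lt _ _ lt_jj') _; rewrite eq_j'i.
- exact: x_lt.
Qed.

Lemma replace_at_notin : v \notin x.
Proof.
have x_lt := iffLR (increasing_tnth x) x_incr.
apply/tnthP => -[j eq_v]; case: (ltngtP i j) => [/lt_v_x | /x_lt lt_ji | /val_inj eq_ij].
- by rewrite eq_v ltnn.
- by move: lt_xi_v; rewrite eq_v ltnNge (ltnW lt_ji).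
- by move: lt_xi_v; rewrite eq_v eq_ij ltnn.
Qed.

Lemma setI_replace_at :
  [set y in x] :&: [set y in replace_at x i v] = [set y in x] :\ tnth x i.
Proof.
apply/setP => y; rewrite !inE; case: (boolP (y \in x)) => [/tnthP[j ->]|_]; last by rewrite andbF.
rewrite /= andbT (inj_eq (increasing_inj x_incr)).
apply/tnthP/idP => [[j'] | ne_ji]; last by exists j; rewrite tnth_replace_at (negbTE ne_ji).
rewrite tnth_replace_at; case: eqVneq => [_ eq_v | ne_j'i /(increasing_inj x_incr) -> //].
by move: replace_at_notin; rewrite -eq_v mem_tnth.
Qed.

Lemma adjacent_replace_at : adjacent x (replace_at x i v).
Proof.
rewrite setI_replace_at; have := cardsD1 (tnth x i) [set y in x].
by rewrite inE mem_tnth add1n card_increasing // => card_x; apply/eqP; lia.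
Qed.

End ReplaceAt.

(* Raise by one the last entry at which a lies strictly below b. *)
Lemma bruhat_lt_adjacent_step a b : increasing a -> increasing b -> bruhat_lt a b ->
  exists z, [/\ increasing z, adjacent a z, bruhat_lt a z & bruhat_le z b].
Proof.
move=> a_incr b_incr /andP[/forallP le_ab ne_ab].
have [i0 lt_i0] : exists i, tnth a i < tnth b i.
  apply/existsP; apply: contraNT ne_ab => /existsPn ge_ab.
  apply/eqP/eq_from_tnth => i; apply/val_inj/eqP.
  by rewrite eqn_leq le_ab leqNgt ge_ab.
case: (@arg_maxnP _ i0 (fun j => tnth a j < tnth b j) val lt_i0) => i lt_i max_i.
have lt_succ_n : (tnth a i).+1 < n := leq_ltn_trans lt_i (ltn_ord _).
have lt_v_a (j : 'I_k) : i < j -> (tnth a i).+1 < tnth a j.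
  move=> lt_ij; have eq_j : nat_of_ord (tnth a j) = tnth b j.
    apply/eqP; rewrite eqn_leq le_ab leqNgt; apply/negP => /max_i /=.
    by rewrite leqNgt lt_ij.
  by rewrite eq_j (leq_ltn_trans lt_i) // (iffLR (increasing_tnth b) b_incr).
exists (replace_at a i (Ordinal lt_succ_n)); split.
- exact: increasing_replace_at.
- exact: adjacent_replace_at.
- exact: bruhat_lt_replace_at.
- by apply/forallP => j; rewrite tnth_replace_at; case: eqP => [->|_].
Qed.

Definition bruhat_convex (X : {set elt}) : Prop :=
  forall a b z, a \in X -> b \in X -> increasing z ->
  bruhat_le a z -> bruhat_le z b -> z \in X.

Lemma order_ideal_convex X : order_ideal X -> bruhat_convex X.
Proof. by case=> _ X_ideal a b z _ bX z_incr _; apply: X_ideal. Qed.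

Lemma interval_subposet X : interval X -> is_subposet X.
Proof. by case=> [x [y [_ [_ ->]]]] z; rewrite inE => /andP[]. Qed.

Lemma interval_convex X : interval X -> bruhat_convex X.
Proof.
case=> [x [y [_ [_ ->]]]] a b z; rewrite !inE => /and3P[_ le_xa _] /and3P[_ _ le_by].
by move=> -> le_az le_zb; rewrite (bruhat_le_trans le_xa le_az) (bruhat_le_trans le_zb le_by).
Qed.

Section LinearExtension.
Variables (X : {set elt}) (L : seq elt).
Hypotheses (k_gt0 : 0 < k) (X_sub : is_subposet X) (X_convex : bruhat_convex X)
  (L_ext : linear_extension X L).

Lemma linear_extension_mem i x : onth L i = Some x -> x \in X.
Proof. by case: L_ext => _ [<- _] Ei; apply/onthP; exists i. Qed.

Lemma linear_extension_index x : x \in X -> exists i, onth L i = Some x.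
Proof. by case: L_ext => _ [L_mem _]; rewrite -L_mem => /onthP. Qed.

Lemma linear_extension_lt i j x y :
  onth L i = Some x -> onth L j = Some y -> bruhat_lt x y -> i < j.
Proof. by case: L_ext => _ [_]; apply. Qed.

Lemma linear_extension_inj i j x : onth L i = Some x -> onth L j = Some x -> i = j.
Proof.
case: L_ext => L_uniq _ Ei Ej; apply: onth_inj (etrans Ei (esym Ej)) => //.
by rewrite (leq_ltn_trans (geq_minr _ _)) // -onthTE Ei.
Qed.

Lemma linear_extension_le i j x y :
  onth L i = Some x -> onth L j = Some y -> bruhat_le x y -> i <= j.
Proof.
move=> Ei Ej le_xy; case: (eqVneq x y) => [eq_xy | ne_xy].
  by rewrite (linear_extension_inj Ei (j := j)) // eq_xy.
by apply/ltnW/(linear_extension_lt Ei Ej); apply/andP.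
Qed.

Lemma exists_adjacent_between i j a b :
  onth L i = Some a -> onth L j = Some b -> bruhat_lt a b ->
  exists m z, [/\ onth L m = Some z, i < m <= j & adjacent a z].
Proof.
move=> Ei Ej lt_ab; have aX := linear_extension_mem Ei; have bX := linear_extension_mem Ej.
have [z [z_incr adj_az lt_az le_zb]] := bruhat_lt_adjacent_step (X_sub aX) (X_sub bX) lt_ab.
have [m Em] := linear_extension_index (X_convex aX bX z_incr (bruhat_ltW lt_az) le_zb).
exists m, z; split=> //.
by rewrite (linear_extension_lt Ei Em) // (linear_extension_le Em Ej).
Qed.

Lemma adjacent_before_hasse_neighbour i j a b :
  onth L i = Some a -> onth L j = Some b -> i < j ->
  bruhat_covers a b || bruhat_covers b a ->
  exists m z, [/\ onth L m = Some z, i < m <= j & adjacent a z].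
Proof.
move=> Ei Ej lt_ij /orP[/andP[lt_ba _] | /andP[lt_ab _]].
  by have := linear_extension_lt Ej Ei lt_ba; rewrite ltnNge (ltnW lt_ij).
exact: exists_adjacent_between Ei Ej lt_ab.
Qed.

Lemma first_adjacent_covers i j a b :
  onth L i = Some a -> onth L j = Some b -> i < j -> adjacent a b ->
  (forall m z, onth L m = Some z -> i < m < j -> ~~ adjacent a z) ->
  bruhat_covers b a.
Proof.
move=> Ei Ej lt_ij adj_ab no_adj; have aX := linear_extension_mem Ei.
have bX := linear_extension_mem Ej.
have lt_ab : bruhat_lt a b.
  case/orP: (bruhat_comparable_adjacent k_gt0 (X_sub aX) (X_sub bX) adj_ab) => [le_ab | le_ba].
    apply/andP; split=> //; apply: contraTneq lt_ij => eq_ab.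
    by rewrite (linear_extension_inj Ei (j := j)) ?ltnn // eq_ab.
  by have := linear_extension_le Ej Ei le_ba; rewrite leqNgt lt_ij.
rewrite /bruhat_covers lt_ab; apply/negP => /existsP[z /and3P[z_incr lt_az lt_zb]].
have [m' Em'] :=
  linear_extension_index (X_convex aX bX z_incr (bruhat_ltW lt_az) (bruhat_ltW lt_zb)).
have [m [z' [Em /andP[lt_im le_mm'] adj_az']]] := exists_adjacent_between Ei Em' lt_az.
have lt_m'j := linear_extension_lt Em' Ej lt_zb.
by move: (no_adj m z' Em); rewrite lt_im (leq_ltn_trans le_mm' lt_m'j) adj_az' => /(_ isT).
Qed.

Lemma dual_graph_onth i j a b : onth L i = Some a -> onth L j = Some b ->
  dual_graph L i.+1 j.+1 = (i != j) && adjacent a b.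
Proof. by move=> Ei Ej; rewrite /dual_graph /= Ei Ej. Qed.

Lemma hasse_graph_onth i j a b : onth L i = Some a -> onth L j = Some b ->
  hasse_graph L i.+1 j.+1 = (i != j) && (bruhat_covers a b || bruhat_covers b a).
Proof. by move=> Ei Ej; rewrite /hasse_graph /= Ei Ej. Qed.

Lemma track_next_dual_hasse v :
  track_next (dual_graph L) (size L) v = track_next (hasse_graph L) (size L) v.
Proof.
rewrite /track_next; case: v => [|v].
  (* vertices are numbered from 1: row 0 of both graphs is empty by computation *)
  by congr ohead.
case Ev: (onth L v) => [a|]; last first.
  by congr ohead; apply: eq_filter => j; rewrite /dual_graph /hasse_graph /= Ev.
have in_range m : v < m -> m < size L -> m.+1 \in iota v.+2 (size L - v.+1).
  by move=> lt_vm lt_mL; rewrite mem_iota; lia.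
apply: ohead_filter_eq; first exact: iota_ltn_sorted.
- move=> [|j]; rewrite mem_iota // ltnS => /andP[lt_vj _].
  case Ej: (onth L j) => [b|]; last by rewrite /hasse_graph /= Ev Ej.
  rewrite (hasse_graph_onth Ev Ej) => /andP[_ cov].
  have [m [z [Em /andP[lt_vm le_mj] adj_az]]] := adjacent_before_hasse_neighbour Ev Ej lt_vj cov.
  exists m.+1; first by rewrite in_range // -onthTE Em.
  by rewrite ltnS le_mj (dual_graph_onth Ev Em) (ltn_eqF lt_vm).
- move=> [|j]; rewrite mem_iota // ltnS => /andP[lt_vj _].
  case Ej: (onth L j) => [b|]; last by rewrite /dual_graph /= Ev Ej.
  rewrite (dual_graph_onth Ev Ej) (hasse_graph_onth Ev Ej) => /andP[ne_vj adj_ab] first_dual.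
  rewrite ne_vj (first_adjacent_covers Ev Ej) ?orbT // => m z Em /andP[lt_vm lt_mj].
  have := first_dual m.+1; rewrite in_range ?(ltn_trans lt_mj) -?onthTE ?Ej //.
  by rewrite ltnS (dual_graph_onth Ev Em) (ltn_eqF lt_vm) => /(_ isT lt_mj).
Qed.
End LinearExtension.
End Bruhat.

Section Promotion.
Variables (G1 G2 : nat -> nat -> bool) (h : nat).
Hypothesis eq_next : forall v, track_next G1 h v = track_next G2 h v.

Lemma eq_track_from fuel v : track_from G1 h fuel v = track_from G2 h fuel v.
Proof.
elim: fuel v => [|fuel IH] v //=; rewrite eq_next.
by case: track_next => // w; rewrite IH.
Qed.

Lemma eq_promotion : promotion G1 h =1 promotion G2 h.
Proof. by move=> i; rewrite /promotion /track eq_track_from eq_next. Qed.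

End Promotion.

Lemma eq_perm_act (T : Type) (sigma tau : nat -> nat) (C : seq T) :
  sigma =1 tau -> perm_act sigma C = perm_act tau C.
Proof.
by move=> eq_st; apply: eq_pmap => p; congr onth; apply: eq_find => i; rewrite eq_st.
Qed.

Theorem corollary5p8 (n k : nat) (X : {set k.-tuple 'I_n}) (L : seq (k.-tuple 'I_n)) :
  0 < k -> k <= n ->
  (order_ideal X \/ interval X) ->
  linear_extension X L ->
  promD L = promH L.
Proof.
move=> k_gt0 _ X_shape L_ext.
have X_sub : is_subposet X by case: X_shape => [[]|/interval_subposet].
have X_convex : bruhat_convex X by case: X_shape => [/order_ideal_convex|/interval_convex].
exact/eq_perm_act/eq_promotion/(track_next_dual_hasse k_gt0 X_sub X_convex L_ext).
Qed.
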